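(* Let $k \ge 2$ and $E \ge 1$ be integers, and let $n_{k,E}$ be the smallest positive integer $n$ such that for every subset $S \subseteq \{0,\dots,n-1\}$ with at most $E$ elements there exist integers $r \ge 0$ and $s > 0$ with $r + s(k-1) \le n-1$ and $r + is \notin S$ for all $0 \le i \le k-1$. Then $n_{k,E} \le k(E+1)$, and $n_{k,E} = k(E+1)$ if and only if $E + 2 \le g$, where $g$ is the smallest prime factor of $k$.
   Context: $n_{k,E}$ is the minimum length of a sequence such that, whatever the positions of at most $E$ errors, some arithmetic progression of $k$ indices inside $\{0,\dots,n-1\}$ avoids all error positions. *)

From mathcomp Require Import all_boot.
Set Implicit Arguments. Unset Strict Implicit. Unset Printing Implicit Defensive.

Definition ap_avoids (n k : nat) (S : {set 'I_n}) : Prop :=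
  exists r s : nat, 0 < s /\ r + s * (k - 1) <= n - 1 /\
    forall i : nat, i <= k - 1 -> forall x : 'I_n, x \in S -> nat_of_ord x != r + i * s.

Definition good (k E n : nat) : Prop :=
  forall S : {set 'I_n}, #|S| <= E -> ap_avoids k S.

Definition is_nkE (k E m : nat) : Prop :=
  0 < m /\ good k E m /\ forall n : nat, 0 < n -> good k E n -> m <= n.

From mathcomp Require Import all_boot.
From mathcomp Require Import zify.
From Stdlib Require Import Classical Wf_nat.

Set Implicit Arguments.
Unset Strict Implicit.
Unset Printing Implicit Defensive.

(* If some window of k consecutive positions is error-free, take it as the
   progression (s = 1).  Otherwise every such window holds an error; as [E+1]
   disjoint windows fit into [k(E+1)] positions, this gives [n_{k,E} <= k(E+1)].
   For [n = k(E+1) - 1] the same counting forces every error to lie at a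
   position [= k-1 (mod k)], so the progression [0, p, ..., (k-1)p] with
   [p = pdiv k] avoids them, because [p] divides [k] but not [k - 1]; it
   fits into the interval as soon as [p <= E + 1].  Conversely, if
   [pdiv k >= E + 2], the at most [E] positions [= k-1 (mod k)] block every
   progression: a step coprime to [k] runs through all residues mod [k], and
   any other step is at least [pdiv k], too long for the interval. *)

Definition count_between n (S : {set 'I_n}) a b :=
  \sum_(a <= i < b) ([exists y in S, val y == i] : nat).

Section Counting.

Variables (n : nat) (S : {set 'I_n}).

Lemma count_between_cat a b c : a <= b -> b <= c ->
  count_between S a c = count_between S a b + count_between S b c.
Proof. by move=> ab bc; rewrite /count_between (big_cat_nat ab bc). Qed.

Lemma count_between_all : count_between S 0 n = #|S|.
Proof.
rewrite /count_between big_mkord -sum1_card [in RHS]big_mkcond /=.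
apply: eq_bigr => i _.
have -> : [exists y in S, val y == val i] = (i \in S).
  apply/existsP/idP => [[y /andP [yS /eqP /val_inj <-]] //|iS].
  by exists i; rewrite iS eqxx.
by case: (i \in S).
Qed.

Lemma count_between1 (x : 'I_n) : x \in S -> count_between S x x.+1 = 1.
Proof.
move=> xS; rewrite /count_between big_nat1.
suff -> : [exists y in S, val y == val x] by [].
by apply/existsP; exists x; rewrite xS eqxx.
Qed.

Definition hits_windows k :=
  forall j, j + k <= n -> exists2 y : 'I_n, y \in S & j <= y < j + k.

Lemma count_between_windows k : hits_windows k ->
  forall m a, a + m * k <= n -> m <= count_between S a (a + m * k).
Proof.
move=> hit; elim=> [//|m IHm] a le_n.
have [y yS /andP [le_ay lt_y]] := hit a ltac:(lia).
rewrite (count_between_cat (b := a + k)) 1?(count_between_cat (a := a) (b := y));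
  try lia.
rewrite (count_between_cat (a := y) (b := y.+1)) 1?count_between1 //; try lia.
have := IHm (a + k) ltac:(lia).
by rewrite (_ : a + k + m * k = a + m.+1 * k); lia.
Qed.

Lemma hits_windows_of_not_ap_avoids k :
  0 < k -> ~ ap_avoids k S -> hits_windows k.
Proof.
move=> k_gt0 not_avoid j jk; apply: NNPP => no_hit; apply: not_avoid.
exists j, 1; split=> //; split; first lia.
move=> i ik x xS; apply/eqP => x_eq; apply: no_hit.
by exists x => //; rewrite x_eq; lia.
Qed.

End Counting.

Lemma good_mul_succ k E : 0 < k -> good k E (k * (E + 1)).
Proof.
move=> k_gt0 S card_S; apply: NNPP => /(hits_windows_of_not_ap_avoids k_gt0) hit.
have := count_between_windows hit (m := E + 1) (a := 0) ltac:(lia).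
by rewrite add0n [in X in count_between _ _ X]mulnC count_between_all; lia.
Qed.

(* An error at [x = q k + c] with [c < k - 1] leaves room for [q] windows
   before it and [E - q] windows after it. *)
Lemma hits_windows_mod_pred k E (S : {set 'I_(k * (E + 1) - 1)}) :
  0 < k -> #|S| <= E -> hits_windows S k -> forall x, x \in S -> x %% k = k - 1.
Proof.
move=> k_gt0 card_S hit x xS.
have c_lt : x %% k < k by rewrite ltn_pmod.
have x_eq := divn_eq x k; set c := x %% k in c_lt x_eq *; set q := x %/ k in x_eq.
have x_lt : x < k * (E + 1) - 1 := ltn_ord x.
case: (ltnP c (k - 1)) => [lt_c|]; last by lia.
have q_le : q <= E by nia.
have before := count_between_windows hit (m := q) (a := c) ltac:(nia).
have after := count_between_windows hit (m := E - q) (a := x.+1) ltac:(nia).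
have := count_between_all S.
rewrite (count_between_cat S (b := c)) 1?(count_between_cat S (a := c) (b := x));
  try lia.
rewrite (count_between_cat S (a := x) (b := x.+1)) 1?count_between1 //; try lia.
rewrite (count_between_cat S (a := x.+1) (b := x.+1 + (E - q) * k)); try nia.
by rewrite (_ : c + q * k = x) in before; lia.
Qed.

Lemma good_mul_succ_pred k E : 2 <= k -> pdiv k <= E + 1 ->
  good k E (k * (E + 1) - 1).
Proof.
move=> k_ge2 p_le S card_S; apply: NNPP => not_avoid.
have residue := hits_windows_mod_pred (k := k) ltac:(lia) card_S
  (hits_windows_of_not_ap_avoids (k := k) ltac:(lia) not_avoid).
apply: not_avoid; set p := pdiv k.
have p_prime : prime p by apply: pdiv_prime; lia.
have p_dvd_k : p %| k by apply: pdiv_dvd.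
have p_le_k : p <= k by apply: pdiv_leq; lia.
have p_gt1 := prime_gt1 p_prime.
exists 0, p; split; first lia; split; first nia.
move=> i _ x xS; apply/negP => /eqP x_eq.
have p_dvd_x : p %| x by rewrite x_eq add0n dvdn_mull.
move: p_dvd_x; rewrite (divn_eq x k) residue // dvdn_addr ?dvdn_mull //.
move=> /(dvdn_sub p_dvd_k); rewrite (_ : k - (k - 1) = 1) ?dvdn1; lia.
Qed.

Lemma card_mod_pred_le n k : 0 < k ->
  #|[set x : 'I_n | x %% k == k - 1]| <= n %/ k.
Proof.
move=> k_gt0; case: n => [|n]; first by rewrite (leq_trans (max_card _)) ?card_ord.
pose f (i : 'I_(n.+1 %/ k)) : 'I_n.+1 := inord (i * k + k - 1).
have sub : [set x : 'I_n.+1 | x %% k == k - 1] \subset f @: 'I_(n.+1 %/ k).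
  apply/subsetP => x; rewrite inE => /eqP x_mod.
  have x_eq := divn_eq x k; rewrite x_mod in x_eq.
  have x_lt := ltn_ord x.
  have q_lt : x %/ k < n.+1 %/ k.
    by rewrite leq_divRL //; lia.
  apply/imsetP; exists (Ordinal q_lt) => //.
  by apply: val_inj; rewrite /f /= inordK; lia.
apply: (leq_trans (subset_leq_card sub)).
by rewrite (leq_trans (leq_imset_card _ _)) ?card_ord.
Qed.

Lemma coprime_step_hits_residue k r s c : 0 < k -> coprime s k -> c < k ->
  exists2 i, i < k & (r + i * s) %% k = c.
Proof.
move=> k_gt0 s_co c_lt.
pose f (i : 'I_k) : 'I_k := Ordinal (ltn_pmod (r + i * s) k_gt0).
suff /injF_onto/(_ (Ordinal c_lt))/codomP[i /(congr1 val) /= ->] : injective f.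
  by exists i.
have step (i j : 'I_k) : j <= i -> f i = f j -> i = j.
  move=> ji /(congr1 val) /eqP /=; rewrite eqn_mod_dvd; last by nia.
  rewrite (_ : r + i * s - (r + j * s) = (i - j) * s); last by nia.
  rewrite Gauss_dvdl 1?coprime_sym // => /dvdn_leq k_le.
  by apply: ord_inj; have := ltn_ord i; case: (posnP (i - j)) => [|/k_le]; lia.
move=> i j fij; case: (leqP j i) => [ji | /ltnW ij]; first exact: step.
exact/esym/step.
Qed.

Lemma not_good_lt k E n : 2 <= k -> E + 2 <= pdiv k ->
  0 < n -> n < k * (E + 1) -> ~ good k E n.
Proof.
move=> k_ge2 p_ge; case: n => [//|n] _ n_lt good_n.
set S := [set x : 'I_n.+1 | x %% k == k - 1].
have card_S : #|S| <= E.
  apply: (leq_trans (card_mod_pred_le _ (k := k) ltac:(lia))).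
  by rewrite -ltnS ltn_divLR; lia.
have [r [s [s_gt0 [rs_le avoid]]]] := good_n S card_S.
have [s_co | s_nco] := boolP (coprime s k).
  have [i i_lt r_i] :=
    coprime_step_hits_residue r (k := k) ltac:(lia) s_co (c := k - 1) ltac:(lia).
  have is_le : i * s <= (k - 1) * s by apply: leq_mul; lia.
  have ri_lt : r + i * s < n.+1 by lia.
  have riS : Ordinal ri_lt \in S by rewrite inE /= r_i.
  by have := avoid i ltac:(lia) _ riS; rewrite eqxx.
have gcd_gt1 : 1 < gcdn s k.
  by rewrite ltn_neqAle eq_sym -/(coprime s k) s_nco gcdn_gt0 s_gt0.
have p_le_gcd : pdiv k <= gcdn s k by apply: pdiv_min_dvd; rewrite ?dvdn_gcdr.
have gcd_le_s : gcdn s k <= s by apply: dvdn_leq; rewrite ?dvdn_gcdl.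
have p_le_k : pdiv k <= k by apply: pdiv_leq; lia.
have : (E + 2) * (k - 1) <= s * (k - 1) by apply: leq_mul; lia.
nia.
Qed.

Lemma ex_least (P : nat -> Prop) : (exists n, P n) ->
  exists m, P m /\ forall n, P n -> m <= n.
Proof.
move=> exP; have [m [[Pm m_min] _]] :=
  dec_inh_nat_subset_has_unique_least_element P (fun n => classic (P n)) exP.
by exists m; split=> // n /m_min /leP.
Qed.

Theorem lemma2 (k E : nat) (hk : 2 <= k) (hE : 1 <= E) :
  exists m : nat, is_nkE k E m /\ m <= k * (E + 1) /\
    (m = k * (E + 1) <-> E + 2 <= pdiv k).
Proof.
have top_gt0 : 0 < k * (E + 1) by nia.
have good_top : good k E (k * (E + 1)) by apply: good_mul_succ; lia.
have [m [[m_gt0 good_m] m_min]] := @ex_least (fun n => 0 < n /\ good k E n)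
  (ex_intro _ _ (conj top_gt0 good_top)).
have m_le : m <= k * (E + 1) by apply: m_min.
exists m; split; first by do 2!split=> //; move=> n n_gt0 good_n; apply: m_min.
split=> //; split=> [m_eq | p_ge].
  rewrite leqNgt; apply/negP => p_lt.
  have good_pred : good k E (k * (E + 1) - 1) by apply: good_mul_succ_pred; lia.
  have pred_gt0 : 0 < k * (E + 1) - 1 by nia.
  have := m_min _ (conj pred_gt0 good_pred); lia.
apply/eqP; rewrite eqn_leq m_le leqNgt; apply/negP => m_lt.
exact: (not_good_lt hk p_ge m_gt0 m_lt good_m).
Qed.
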